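(* Let $\mathcal{L}$ be a base algebra over a Hopf algebra $\mathcal{H}$, and let $\mathcal{A}$ be a left $\mathcal{H}$-module equipped with an $\mathcal{H}$-equivariant linear map $\divideontimes\colon\mathcal{A}\otimes\mathcal{A}\to\mathcal{A}\otimes\mathcal{L}$. Then $\mathcal{A}$ is a dynamical associative algebra over $\mathcal{L}$ with respect to $\divideontimes$ if and only if the operation $$(\mathcal{A}\otimes\mathcal{L})\otimes(\mathcal{A}\otimes\mathcal{L})\xrightarrow{\ \mathrm{id}\otimes\tau_\mathcal{A}\otimes\mathrm{id}\ }\mathcal{A}\otimes\mathcal{A}\otimes\mathcal{L}\otimes\mathcal{L}\xrightarrow{\ \divideontimes\otimes\mathrm{m}\ }\mathcal{A}\otimes\mathcal{L}\otimes\mathcal{L}\xrightarrow{\ \mathrm{id}\otimes\mathrm{m}\ }\mathcal{A}\otimes\mathcal{L}$$ makes $\mathcal{A}\otimes\mathcal{L}$ an associative $\mathcal{H}$-module algebra.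
   Context: $\mathcal{H}$ is a Hopf algebra over a commutative ring $k$ (over a field of characteristic zero), Sweedler notation $\Delta(x)=x^{(1)}\otimes x^{(2)}$. A base algebra over $\mathcal{H}$ is a left $\mathcal{H}$-module algebra and left $\mathcal{H}$-comodule algebra $\mathcal{L}$ (action $\triangleright$, multiplication $\mathrm{m}$, coaction $\ell\mapsto\ell^{(1)}\otimes\ell^{[2]}$) such that $\{x^{(1)}\triangleright\ell\}^{(1)}x^{(2)}\otimes\{x^{(1)}\triangleright\ell\}^{[2]}=x^{(1)}\ell^{(1)}\otimes x^{(2)}\triangleright\ell^{[2]}$ and $\ell_1\ell_2=(\ell_1^{(1)}\triangleright\ell_2)\ell_1^{[2]}$. For an $\mathcal{H}$-module $A$, $\tau_A\colon\mathcal{L}\otimes A\to A\otimes\mathcal{L}$ is $\tau_A(\ell\otimes a)=\ell^{(1)}\triangleright a\otimes\ell^{[2]}$. A dynamical associative algebra over $\mathcal{L}$ is a left $\mathcal{H}$-module $\mathcal{A}$ with an $\mathcal{H}$-equivariant map $\divideontimes\colon\mathcal{A}\otimes\mathcal{A}\to\mathcal{A}\otimes\mathcal{L}$ such that the two maps $\mathcal{A}\otimes\mathcal{A}\otimes\mathcal{A}\to\mathcal{A}\otimes\mathcal{L}$ $$(\mathrm{id}\otimes\mathrm{m})\circ(\divideontimes\otimes\mathrm{id})\circ(\mathrm{id}\otimes\tau_\mathcal{A})\circ(\divideontimes\otimes\mathrm{id})\quad\text{and}\quad(\mathrm{id}\otimes\mathrm{m})\circ(\divideontimes\otimes\mathrm{id})\circ(\mathrm{id}\otimes\divideontimes)$$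 coincide. *)

(* Tensor products over a commutative ring are not in
   MathComp, so we construct them here (as a quotient of formal sums of pure
   tensors by the relation "equal under every bilinear map"), and then define
   Hopf algebras, base algebras and the dynamical structures of the paper. *)
From HB Require Import structures.
From mathcomp Require Import all_boot all_algebra.
From mathcomp Require Import generic_quotient boolp.
Set Implicit Arguments. Unset Strict Implicit. Unset Printing Implicit Defensive.
Import GRing.Theory.
Local Open Scope ring_scope.
Local Open Scope quotient_scope.

Section Tensor.
Variables (R : comNzRingType) (U V : lmodType R).

Definition bilinear_map (W : lmodType R) (f : U -> V -> W) :=
  (forall a u u' v, f (a *: u + u') v = a *: f u v + f u' v) /\
  (forall a u v v', f u (a *: v + v') = a *: f u v + f u v').

Definition tsum (W : zmodType) (f : U -> V -> W) (s : seq (U * V)) : W :=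
  \sum_(p <- s) f p.1 p.2.

Definition teqv (s t : seq (U * V)) : Prop :=
  forall (W : lmodType R) (f : U -> V -> W), bilinear_map f -> tsum f s = tsum f t.

Definition teqvb s t : bool := `[< teqv s t >].

Lemma teqvb_refl : reflexive teqvb.
Proof. by move=> s; apply/asboolP. Qed.
Lemma teqvb_sym : symmetric teqvb.
Proof.
by move=> s t; apply/asboolP/asboolP => H W f hf; rewrite (H W f hf).
Qed.
Lemma teqvb_trans : transitive teqvb.
Proof.
move=> t s u /asboolP H1 /asboolP H2; apply/asboolP => W f hf.
by rewrite (H1 W f hf) (H2 W f hf).
Qed.

Definition teqv_rel := EquivRel teqvb teqvb_refl teqvb_sym teqvb_trans.

Definition tensor := {eq_quot teqv_rel}.
HB.instance Definition _ := Choice.on tensor.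
HB.instance Definition _ := Quotient.on tensor.

Lemma bilin0l (W : lmodType R) (f : U -> V -> W) : bilinear_map f -> forall v, f 0 v = 0.
Proof.
move=> [h _] v; have := h 1 0 0 v; rewrite !scale1r addr0 => E.
by apply: (addrI (f 0 v)); rewrite addr0 -E.
Qed.

Lemma bilinZl (W : lmodType R) (f : U -> V -> W) : bilinear_map f ->
  forall a u v, f (a *: u) v = a *: f u v.
Proof.
move=> hf a u v; have := hf.1 a u 0 v; rewrite addr0 => ->.
by rewrite bilin0l // addr0.
Qed.

Lemma tsum_cat (W : zmodType) (f : U -> V -> W) s t : tsum f (s ++ t) = tsum f s + tsum f t.
Proof. by rewrite /tsum big_cat. Qed.

Definition tscale_seq (a : R) (s : seq (U * V)) := map (fun p => (a *: p.1, p.2)) s.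

Lemma tsum_scale (W : lmodType R) (f : U -> V -> W) : bilinear_map f ->
  forall a s, tsum f (tscale_seq a s) = a *: tsum f s.
Proof.
move=> hf a s; rewrite /tsum big_map scaler_sumr; apply: eq_bigr => p _.
by rewrite bilinZl.
Qed.

Lemma tsum_pi (W : lmodType R) (f : U -> V -> W) : bilinear_map f ->
  forall s, tsum f (repr (\pi_tensor s)) = tsum f s.
Proof.
move=> hf s; have /eqmodP /asboolP H : repr (\pi_tensor s) = s %[mod tensor].
  by rewrite reprK.
exact: H.
Qed.

Definition tzero : tensor := \pi_tensor [::].
Definition tadd (x y : tensor) : tensor := \pi_tensor (repr x ++ repr y).
Definition tscale (a : R) (x : tensor) : tensor := \pi_tensor (tscale_seq a (repr x)).
Definition topp (x : tensor) : tensor := tscale (-1) x.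

Lemma tensor_eqP (x y : tensor) :
  (forall (W : lmodType R) (f : U -> V -> W), bilinear_map f -> tsum f (repr x) = tsum f (repr y)) ->
  x = y.
Proof.
move=> H; rewrite -[x]reprK -[y]reprK; apply/eqmodP/asboolP => W f hf.
exact: H.
Qed.

Ltac tnorm hf :=
  repeat (rewrite ?(tsum_pi hf) ?(tsum_scale hf) ?tsum_cat /=).

Lemma taddA : associative tadd.
Proof. by move=> x y z; apply: tensor_eqP => W f hf; tnorm hf; rewrite addrA. Qed.
Lemma taddC : commutative tadd.
Proof. by move=> x y; apply: tensor_eqP => W f hf; tnorm hf; rewrite addrC. Qed.
Lemma tadd0 : left_id tzero tadd.
Proof.
by move=> x; apply: tensor_eqP => W f hf; tnorm hf; rewrite /tsum big_nil add0r.
Qed.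
Lemma taddN : left_inverse tzero topp tadd.
Proof.
move=> x; apply: tensor_eqP => W f hf; rewrite /topp /tscale; tnorm hf.
by rewrite scaleN1r addNr /tsum big_nil.
Qed.

HB.instance Definition _ := GRing.isZmodule.Build tensor taddA taddC tadd0 taddN.

Lemma tscaleA a b (x : tensor) : tscale a (tscale b x) = tscale (a * b) x.
Proof.
by apply: tensor_eqP => W f hf; rewrite /tscale; tnorm hf; rewrite scalerA.
Qed.
Lemma tscale1 : left_id 1 tscale.
Proof.
by move=> x; apply: tensor_eqP => W f hf; rewrite /tscale; tnorm hf; rewrite scale1r.
Qed.
Lemma tscaleDr : right_distributive tscale +%R.
Proof.
move=> a x y; apply: tensor_eqP => W f hf; rewrite /= /tadd /tscale.
by tnorm hf; rewrite scalerDr.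
Qed.
Lemma tscaleDl (x : tensor) : {morph tscale^~ x : a b / a + b}.
Proof.
move=> a b; apply: tensor_eqP => W f hf; rewrite /= /tadd /tscale.
by tnorm hf; rewrite scalerDl.
Qed.

HB.instance Definition _ :=
  GRing.Zmodule_isLmodule.Build R tensor tscaleA tscale1 tscaleDr tscaleDl.

Definition tmul (u : U) (v : V) : tensor := \pi_tensor [:: (u, v)].

(* the linear map U ⊗ V -> W induced by a bilinear map f : U -> V -> W
   (for f bilinear this is independent of the choice of representative) *)
Definition tlift (W : zmodType) (f : U -> V -> W) (t : tensor) : W := tsum f (repr t).

End Tensor.

Arguments tmul {R U V}.
Arguments tlift {R U V W}.
Notation "u ⊗ v" := (tmul u v) (at level 40, left associativity).

Section TensorOps.
Variable (R : comNzRingType).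

Definition linmap (U V : lmodType R) (f : U -> V) :=
  forall a u v, f (a *: u + v) = a *: f u + f v.

Definition tmap (U V U' V' : lmodType R) (f : U -> U') (g : V -> V')
  : tensor U V -> tensor U' V' := tlift (fun u v => f u ⊗ g v).

Definition tassoc (U V W : lmodType R) : tensor U (tensor V W) -> tensor (tensor U V) W :=
  tlift (fun u t => tlift (fun v w => (u ⊗ v) ⊗ w) t).

Definition talg_mul (B C : algType R) (t s : tensor B C) : tensor B C :=
  tlift (fun b c => tlift (fun b' c' => (b * b') ⊗ (c * c')) s) t.

Definition tact (H U V : lmodType R) (Delta : H -> tensor H H)
  (actU : H -> U -> U) (actV : H -> V -> V) (x : H) (t : tensor U V) : tensor U V :=
  tlift (fun h h' => tmap (actU h) (actV h') t) (Delta x).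

End TensorOps.

Section Hopf.
Variables (k : comNzRingType) (H : algType k).

Definition is_hopf (Delta : H -> tensor H H) (eps : H -> k) (S : H -> H) : Prop :=
  [/\
      [/\ linmap Delta,
          (forall a x y, eps (a *: x + y) = a * eps x + eps y) &
          linmap S],
      (forall x, tmap Delta id (Delta x) = tassoc (tmap id Delta (Delta x))),
      (forall x, tlift (fun h h' => eps h *: h') (Delta x) = x) /\
      (forall x, tlift (fun h h' => eps h' *: h) (Delta x) = x),
      [/\ forall x y, Delta (x * y) = talg_mul (Delta x) (Delta y),
          Delta 1 = 1 ⊗ 1,
          forall x y, eps (x * y) = eps x * eps y &
          eps 1 = 1] &
      (forall x, tlift (fun h h' => S h * h') (Delta x) = eps x *: 1) /\
      (forall x, tlift (fun h h' => h * S h') (Delta x) = eps x *: 1)].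

Definition is_Hmodule (M : lmodType k) (act : H -> M -> M) : Prop :=
  [/\ bilinear_map act,
      forall m, act 1 m = m &
      forall x y m, act (x * y) m = act x (act y m)].

Variable (Delta : H -> tensor H H) (eps : H -> k).

Definition is_Hmodule_algebra (L : algType k) (act : H -> L -> L) : Prop :=
  [/\ is_Hmodule act,
      forall x l1 l2, act x (l1 * l2) = tlift (fun h h' => act h l1 * act h' l2) (Delta x) &
      forall x, act x 1 = eps x *: 1].

Definition is_Hcomodule_algebra (L : algType k) (coact : L -> tensor H L) : Prop :=
  [/\ linmap coact,
      forall l, tmap Delta id (coact l) = tassoc (tmap id coact (coact l)),
      forall l, tlift (fun h m => eps h *: m) (coact l) = l,
      forall l1 l2, coact (l1 * l2) = talg_mul (coact l1) (coact l2) &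
      coact 1 = 1 ⊗ 1].

Definition is_base_algebra (L : algType k) (act : H -> L -> L) (coact : L -> tensor H L)
  : Prop :=
  [/\ is_Hmodule_algebra act,
      is_Hcomodule_algebra coact,
      (forall x l,
         tlift (fun h h' => tlift (fun g m => (g * h') ⊗ m) (coact (act h l))) (Delta x)
       = tlift (fun h h' => tlift (fun g m => (h * g) ⊗ act h' m) (coact l)) (Delta x)) &
      (forall l1 l2, l1 * l2 = tlift (fun h m => act h l2 * m) (coact l1))].

End Hopf.

Section Dynamical.
Variables (k : comNzRingType) (H : algType k) (Delta : H -> tensor H H).
Variables (L : algType k) (actL : H -> L -> L) (coact : L -> tensor H L).
Variables (A : lmodType k) (actA : H -> A -> A).
Variable (star : tensor A A -> tensor A L).

Definition tau : tensor L A -> tensor A L :=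
  tlift (fun l a => tlift (fun h m => actA h a ⊗ m) (coact l)).

(* (id ⊗ m) o (star ⊗ id) o (id ⊗ tau_A) o (star ⊗ id),
   on (A ⊗ A) ⊗ A *)
Definition dyn_lhs : tensor (tensor A A) A -> tensor A L :=
  tlift (fun t a3 =>
    tlift (fun b l =>
      tlift (fun a' l2 =>
        tlift (fun c l' => c ⊗ (l' * l2)) (star (b ⊗ a')))
      (tau (l ⊗ a3)))
    (star t)).

(* (id ⊗ m) o (star ⊗ id) o (id ⊗ star), on (A ⊗ A) ⊗ A *)
Definition dyn_rhs : tensor (tensor A A) A -> tensor A L :=
  tlift (fun t a3 =>
    tlift (fun a1 a2 =>
      tlift (fun b l =>
        tlift (fun c l' => c ⊗ (l' * l)) (star (a1 ⊗ b)))
      (star (a2 ⊗ a3)))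
    t).

Definition is_dynamical_assoc : Prop := forall t, dyn_lhs t = dyn_rhs t.

(* the product on A ⊗ L :
   (id ⊗ m) o (star ⊗ m) o (id ⊗ tau_A ⊗ id) *)
Definition dprod (u v : tensor A L) : tensor A L :=
  tlift (fun a l =>
    tlift (fun a' l' =>
      tlift (fun h l2 =>
        tlift (fun c l'' => c ⊗ (l'' * (l2 * l'))) (star (a ⊗ actA h a')))
      (coact l))
    v) u.

Definition is_assoc_Hmodule_algebra_AL : Prop :=
  (forall u v w, dprod (dprod u v) w = dprod u (dprod v w)) /\
  (forall x u v, tact Delta actA actL x (dprod u v)
                 = tlift (fun h h' => dprod (tact Delta actA actL h u)
                                            (tact Delta actA actL h' v)) (Delta x)).

End Dynamical.

From mathcomp Require Import all_boot all_algebra generic_quotient.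
Set Implicit Arguments. Unset Strict Implicit. Unset Printing Implicit Defensive.
Import GRing.Theory.
Local Open Scope ring_scope.

(* Write ⋆ for the product on A ⊗ L, u·m for right multiplication of u ∈ A ⊗ L by m ∈ L,
   and m ⋄ (a ⊗ l) := τ_A(m ⊗ a)·l.  Then (u·m) ⋆ v = u ⋆ (m ⋄ v), u ⋆ (v·m) = (u ⋆ v)·m and
   (a ⊗ 1) ⋆ (b ⊗ 1) = ⊛(a ⊗ b); as a ⊗ l = (a ⊗ 1)·l, every identity between products
   reduces to factors of the form a ⊗ 1.  Dynamical associativity is associativity on triples
   of such factors, and it spreads to all of A ⊗ L because m ⋄ − is a left multiplier,
   m ⋄ (u ⋆ v) = (m ⋄ u) ⋆ v, a consequence of l₁l₂ = (l₁^(1) ▷ l₂) l₁^[2], coassociativity of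
   the coaction and equivariance of ⊛.  The compatibility of ⋆ with the diagonal H-action holds
   without any associativity, by the same reduction and the compatibility of action and
   coaction in L. *)

Section TensorCalculus.
Variable R : comNzRingType.

Lemma eq_tlift (U V : lmodType R) (W : zmodType) (f g : U -> V -> W) t :
  (forall u v, f u v = g u v) -> tlift f t = tlift g t.
Proof. by move=> efg; apply: eq_bigr => p _; rewrite efg. Qed.

Lemma exchange_tlift (U V U' V' : lmodType R) (W : zmodType)
    (f : U -> V -> U' -> V' -> W) t s :
  tlift (fun u v => tlift (fun u' v' => f u v u' v') s) t
  = tlift (fun u' v' => tlift (fun u v => f u v u' v') t) s.
Proof. exact: exchange_big. Qed.

Lemma linmap0 (U V : lmodType R) (g : U -> V) : linmap g -> g 0 = 0.
Proof.
move=> lin_g; have := lin_g 1 0 0; rewrite !scale1r addr0 => e.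
by apply: (addrI (g 0)); rewrite addr0 -e.
Qed.

Lemma linmapD (U V : lmodType R) (g : U -> V) x y : linmap g -> g (x + y) = g x + g y.
Proof. by move=> lin_g; have := lin_g 1 x y; rewrite !scale1r. Qed.

Lemma linmap_tlift (U V X Y : lmodType R) (g : X -> Y) (K : U -> V -> X) t :
  linmap g -> g (tlift K t) = tlift (fun u v => g (K u v)) t.
Proof.
move=> lin_g; rewrite /tlift /tsum; elim: (repr t) => [|p s IHs].
  by rewrite !big_nil linmap0.
by rewrite !big_cons linmapD // IHs.
Qed.

Lemma bilinear_mapP (U V W : lmodType R) (f : U -> V -> W) :
  (forall v, linmap (f^~ v)) -> (forall u, linmap (f u)) -> bilinear_map f.
Proof. by move=> lin_l lin_r; split=> a u u' v; [apply: lin_l | apply: lin_r]. Qed.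

Lemma bilinear_map_linl (U V W : lmodType R) (f : U -> V -> W) :
  bilinear_map f -> forall v, linmap (f^~ v).
Proof. by case=> + _ v a x y => ->. Qed.

Lemma bilinear_map_linr (U V W : lmodType R) (f : U -> V -> W) :
  bilinear_map f -> forall u, linmap (f u).
Proof. by case=> _ + u a x y => ->. Qed.

Lemma tlift_linmap (U V W : lmodType R) (f : U -> V -> W) :
  bilinear_map f -> linmap (tlift f).
Proof.
move=> bil_f a x y; rewrite /tlift.
change (a *: x + y) with (tadd (tscale a x) y).
by rewrite /tadd /tscale !tsum_pi // tsum_cat tsum_pi // tsum_scale.
Qed.

Lemma tlift_tlift (U V U' V' W : lmodType R) (F : U' -> V' -> W)
    (K : U -> V -> tensor U' V') t :
  bilinear_map F -> tlift F (tlift K t) = tlift (fun u v => tlift F (K u v)) t.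
Proof. by move=> bil_F; apply/linmap_tlift/tlift_linmap. Qed.

Lemma tlift_tmul (U V W : lmodType R) (f : U -> V -> W) u v :
  bilinear_map f -> tlift f (u ⊗ v) = f u v.
Proof. by move=> bil_f; rewrite /tlift tsum_pi // /tsum big_seq1. Qed.

Lemma tmul_bilinear (U V : lmodType R) : bilinear_map (@tmul R U V).
Proof.
by split=> a u u' v; apply: tensor_eqP => W f bil_f;
  rewrite -!/(tlift f _) tlift_linmap // !tlift_tmul //; case: bil_f.
Qed.

Lemma tmul_tliftr (U V X Y : lmodType R) (u : U) (K : X -> Y -> V) t :
  u ⊗ tlift K t = tlift (fun x y => u ⊗ K x y) t.
Proof. exact: (linmap_tlift _ _ (bilinear_map_linr (tmul_bilinear U V) u)). Qed.

Lemma tlift_tmul_id (U V : lmodType R) (t : tensor U V) : tlift tmul t = t.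
Proof.
apply: tensor_eqP => W f bil_f; rewrite -!/(tlift f _) tlift_tlift //.
by apply: eq_tlift => u v; rewrite tlift_tmul.
Qed.

Lemma tensor_ext (U V X : lmodType R) (g g' : tensor U V -> X) :
  linmap g -> linmap g' -> (forall u v, g (u ⊗ v) = g' (u ⊗ v)) -> forall t, g t = g' t.
Proof.
move=> lin_g lin_g' e t; rewrite -(tlift_tmul_id t) !linmap_tlift //.
exact: eq_tlift.
Qed.

Lemma tensor_ext2 (U V U' V' X : lmodType R) (g g' : tensor U V -> tensor U' V' -> X) :
  (forall t', linmap (g^~ t')) -> (forall t, linmap (g t)) ->
  (forall t', linmap (g'^~ t')) -> (forall t, linmap (g' t)) ->
  (forall u v u' v', g (u ⊗ v) (u' ⊗ v') = g' (u ⊗ v) (u' ⊗ v')) ->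
  forall t t', g t t' = g' t t'.
Proof.
move=> lin1 lin2 lin1' lin2' e t t'.
apply: (tensor_ext (g := g^~ t') (g' := g'^~ t')) => // u v.
exact: (tensor_ext (g := g (u ⊗ v)) (g' := g' (u ⊗ v))).
Qed.

Lemma linmap_id (U : lmodType R) : linmap (@id U).
Proof. by []. Qed.

Lemma linmap_comp (X Y Z : lmodType R) (f : Y -> Z) (E : X -> Y) :
  linmap f -> linmap E -> linmap (fun x => f (E x)).
Proof. by move=> lin_f lin_E a x y; rewrite lin_E lin_f. Qed.

Lemma linmap_tlift_param (X U V W : lmodType R) (F : X -> U -> V -> W) t :
  (forall u v, linmap (fun x => F x u v)) -> linmap (fun x => tlift (F x) t).
Proof.
move=> lin_F a x y; rewrite /tlift /tsum scaler_sumr -big_split /=.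
by apply: eq_bigr => p _; rewrite lin_F.
Qed.

Lemma linmap_mulr (X : lmodType R) (B : lalgType R) (m : B) (E : X -> B) :
  linmap E -> linmap (fun x => E x * m).
Proof. by move=> lin_E a x y; rewrite lin_E mulrDl scalerAl. Qed.

Lemma linmap_mull (X : lmodType R) (B : algType R) (m : B) (E : X -> B) :
  linmap E -> linmap (fun x => m * E x).
Proof. by move=> lin_E a x y; rewrite lin_E mulrDr scalerAr. Qed.

End TensorCalculus.

Create HintDb linmap.

Ltac linmap_solve := cbv beta; first
  [ apply: linmap_id
  | apply: linmap_tlift_param => ? ?; linmap_solve
  | apply: (linmap_comp (tlift_linmap _)); [bilinear_solve | linmap_solve]
  | apply: (linmap_comp (bilinear_map_linl (tmul_bilinear _ _) _)); linmap_solve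
  | apply: (linmap_comp (bilinear_map_linr (tmul_bilinear _ _) _)); linmap_solve
  | apply: linmap_mulr; linmap_solve
  | apply: linmap_mull; linmap_solve
  | solve [auto with linmap]
  | apply: linmap_comp; [solve [auto with linmap] | linmap_solve] ]
with bilinear_solve := apply: bilinear_mapP => ?; linmap_solve.

Section TensorConstructions.
Variable R : comNzRingType.

Lemma tlift_tmap (U V U' V' W : lmodType R) (F : U' -> V' -> W) (f : U -> U') (g : V -> V') t :
  bilinear_map F -> tlift F (tmap f g t) = tlift (fun u v => F (f u) (g v)) t.
Proof.
move=> bil_F; rewrite /tmap linmap_tlift; last exact: tlift_linmap.
by apply: eq_tlift => u v; rewrite tlift_tmul.
Qed.

Lemma tmap_tmul (U V U' V' : lmodType R) (f : U -> U') (g : V -> V') u v :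
  linmap f -> linmap g -> tmap f g (u ⊗ v) = f u ⊗ g v.
Proof. by move=> lin_f lin_g; rewrite /tmap tlift_tmul //; bilinear_solve. Qed.

Lemma tact_tmul (H U V : lmodType R) (Delta : H -> tensor H H) (actU : H -> U -> U)
    (actV : H -> V -> V) x u v :
  (forall h, linmap (actU h)) -> (forall h, linmap (actV h)) ->
  tact Delta actU actV x (u ⊗ v) = tlift (fun h h' => actU h u ⊗ actV h' v) (Delta x).
Proof. by move=> linU linV; apply: eq_tlift => h h'; rewrite tmap_tmul. Qed.

Lemma tlift_tassoc (U V X W : lmodType R) (G : U -> V -> X -> W) t :
  (forall v x, linmap (fun u => G u v x)) -> (forall u x, linmap (fun v => G u v x)) ->
  (forall u v, linmap (G u v)) ->
  tlift (fun s x => tlift (fun u v => G u v x) s) (tassoc t)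
  = tlift (fun u s => tlift (fun v x => G u v x) s) t.
Proof.
move=> lin1 lin2 lin3; rewrite /tassoc linmap_tlift; last by apply: tlift_linmap; bilinear_solve.
apply: eq_tlift => u s; rewrite linmap_tlift; last by apply: tlift_linmap; bilinear_solve.
by apply: eq_tlift => v x; rewrite !tlift_tmul //; bilinear_solve.
Qed.

Lemma tlift_talg_mul (B C : algType R) (W : lmodType R) (F : B -> C -> W) s t :
  bilinear_map F ->
  tlift F (talg_mul s t) = tlift (fun b c => tlift (fun b' c' => F (b * b') (c * c')) t) s.
Proof.
move=> bil_F; rewrite /talg_mul linmap_tlift; last exact: tlift_linmap.
apply: eq_tlift => b c; rewrite linmap_tlift; last exact: tlift_linmap.
by apply: eq_tlift => b' c'; rewrite tlift_tmul.
Qed.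

End TensorConstructions.

Section Coassociativity.
Variables (R : comNzRingType) (H M : lmodType R).
Variables (Delta : H -> tensor H H) (rho : M -> tensor H M).
Hypothesis rho_coassoc : forall m, tmap Delta id (rho m) = tassoc (tmap id rho (rho m)).

Lemma coassoc_tlift (W : lmodType R) (G : H -> H -> M -> W) m :
  (forall h' n, linmap (fun h => G h h' n)) -> (forall h n, linmap (fun h' => G h h' n)) ->
  (forall h h', linmap (G h h')) ->
  tlift (fun h n => tlift (fun h1 h2 => G h1 h2 n) (Delta h)) (rho m)
  = tlift (fun h n => tlift (fun h' n' => G h h' n') (rho n)) (rho m).
Proof.
move=> lin1 lin2 lin3.
have := congr1 (tlift (fun s n => tlift (fun h h' => G h h' n) s)) (rho_coassoc m).
by rewrite tlift_tassoc // !tlift_tmap //; bilinear_solve.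
Qed.

End Coassociativity.

Section DynamicalProduct.
Variables (k : comNzRingType) (H : algType k) (Delta : H -> tensor H H) (eps : H -> k).
Hypothesis Delta_lin : linmap Delta.
Hypothesis Delta_coassoc :
  forall x, tmap Delta id (Delta x) = tassoc (tmap id Delta (Delta x)).
Variables (L : algType k) (actL : H -> L -> L) (coact : L -> tensor H L).
Hypothesis base : is_base_algebra Delta eps actL coact.
Variables (A : lmodType k) (actA : H -> A -> A).
Hypothesis modA : is_Hmodule actA.
Variable star : tensor A A -> tensor A L.
Hypothesis star_lin : linmap star.
Hypothesis star_equiv : forall x t,
  star (tact Delta actA actA x t) = tact Delta actA actL x (star t).

Let actA_bilinear : bilinear_map actA. Proof. by case: modA. Qed.
Let actA1 a : actA 1 a = a. Proof. by case: modA. Qed.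
Let actAM x y a : actA (x * y) a = actA x (actA y a). Proof. by case: modA. Qed.
Let actL_bilinear : bilinear_map actL. Proof. by case: base => [[[]]]. Qed.
Let actL_mul x l1 l2 :
  actL x (l1 * l2) = tlift (fun h h' => actL h l1 * actL h' l2) (Delta x).
Proof. by case: base => [[]]. Qed.
Let coact_lin : linmap coact. Proof. by case: base => _ []. Qed.
Let coact_coassoc l : tmap Delta id (coact l) = tassoc (tmap id coact (coact l)).
Proof. by case: base => _ []. Qed.
Let coactM l1 l2 : coact (l1 * l2) = talg_mul (coact l1) (coact l2).
Proof. by case: base => _ []. Qed.
Let coact1 : coact 1 = 1 ⊗ 1. Proof. by case: base => _ []. Qed.
Let coact_actL x l :
  tlift (fun h h' => tlift (fun g m => (g * h') ⊗ m) (coact (actL h l))) (Delta x)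
  = tlift (fun h h' => tlift (fun g m => (h * g) ⊗ actL h' m) (coact l)) (Delta x).
Proof. by case: base. Qed.
Let mul_coact l1 l2 : l1 * l2 = tlift (fun h m => actL h l2 * m) (coact l1).
Proof. by case: base. Qed.

Let coact_actL_tlift (W : lmodType k) (K : H -> L -> W) x l :
  bilinear_map K ->
  tlift (fun h h' => tlift (fun g n => K (g * h') n) (coact (actL h l))) (Delta x)
  = tlift (fun h h' => tlift (fun g n => K (h * g) (actL h' n)) (coact l)) (Delta x).
Proof.
move=> bil_K.
transitivity (tlift K (tlift (fun h h' => tlift (fun g m => (g * h') ⊗ m)
                                 (coact (actL h l))) (Delta x))); last rewrite coact_actL.
all: rewrite tlift_tlift //; apply: eq_tlift => h h'; rewrite tlift_tlift //.
all: by apply: eq_tlift => g n; rewrite tlift_tmul.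
Qed.

Let actA_linl a : linmap (actA^~ a). Proof. exact: bilinear_map_linl actA_bilinear a. Qed.
Let actA_linr h : linmap (actA h). Proof. exact: bilinear_map_linr actA_bilinear h. Qed.
Let actL_linl l : linmap (actL^~ l). Proof. exact: bilinear_map_linl actL_bilinear l. Qed.
Let actL_linr h : linmap (actL h). Proof. exact: bilinear_map_linr actL_bilinear h. Qed.
#[local] Hint Resolve Delta_lin coact_lin star_lin actA_linl actA_linr actL_linl actL_linr
  : linmap.

(* [ract u m] is u·m and [lact m v] is m ⋄ v in the notation of the header. *)
Definition ract (u : tensor A L) (m : L) : tensor A L := tlift (fun a l => a ⊗ (l * m)) u.

Definition lact (m : L) (v : tensor A L) : tensor A L :=
  tlift (fun a l => tlift (fun h n => actA h a ⊗ (n * l)) (coact m)) v.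

Local Notation dp := (dprod coact actA star).
Local Notation TL := (tact Delta actA actL).

Lemma ract_linl m : linmap (ract^~ m). Proof. rewrite /ract; linmap_solve. Qed.
Lemma ract_linr u : linmap (ract u). Proof. rewrite /ract; linmap_solve. Qed.
Lemma lact_linl v : linmap (lact^~ v). Proof. rewrite /lact; linmap_solve. Qed.
Lemma lact_linr m : linmap (lact m). Proof. rewrite /lact; linmap_solve. Qed.
Lemma dprod_linl v : linmap (dp^~ v). Proof. rewrite /dprod; linmap_solve. Qed.
Lemma dprod_linr u : linmap (dp u). Proof. rewrite /dprod; linmap_solve. Qed.
Lemma tact_linl t : linmap (TL^~ t). Proof. rewrite /tact /tmap; linmap_solve. Qed.
Lemma tact_linr x : linmap (TL x). Proof. rewrite /tact /tmap; linmap_solve. Qed.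
#[local] Hint Resolve ract_linl ract_linr lact_linl lact_linr dprod_linl dprod_linr
  tact_linl tact_linr : linmap.

Lemma ract_tlift (U V : lmodType k) (K : U -> V -> tensor A L) t m :
  ract (tlift K t) m = tlift (fun u v => ract (K u v) m) t.
Proof. exact: (linmap_tlift _ _ (ract_linl m)). Qed.

Lemma lact_tlift (U V : lmodType k) (K : U -> V -> tensor A L) t m :
  lact m (tlift K t) = tlift (fun u v => lact m (K u v)) t.
Proof. exact: (linmap_tlift _ _ (lact_linr m)). Qed.

Lemma dprod_tliftl (U V : lmodType k) (K : U -> V -> tensor A L) t w :
  dp (tlift K t) w = tlift (fun u v => dp (K u v) w) t.
Proof. exact: (linmap_tlift _ _ (dprod_linl w)). Qed.

Lemma dprod_tliftr (U V : lmodType k) (K : U -> V -> tensor A L) t w :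
  dp w (tlift K t) = tlift (fun u v => dp w (K u v)) t.
Proof. exact: (linmap_tlift _ _ (dprod_linr w)). Qed.

Lemma tact_tlift (U V : lmodType k) (K : U -> V -> tensor A L) t x :
  TL x (tlift K t) = tlift (fun u v => TL x (K u v)) t.
Proof. exact: (linmap_tlift _ _ (tact_linr x)). Qed.

Lemma star_tlift (U V : lmodType k) (K : U -> V -> tensor A A) t :
  star (tlift K t) = tlift (fun u v => star (K u v)) t.
Proof. exact: (linmap_tlift _ _ star_lin). Qed.

Lemma ract_tmul a l m : ract (a ⊗ l) m = a ⊗ (l * m).
Proof. by rewrite /ract tlift_tmul //; bilinear_solve. Qed.

Lemma tmul_ract1 a l : a ⊗ l = ract (a ⊗ 1) l.
Proof. by rewrite ract_tmul mul1r. Qed.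

Lemma ractA u m m' : ract (ract u m) m' = ract u (m * m').
Proof.
apply: (tensor_ext (g := fun u => ract (ract u m) m') (g' := ract^~ (m * m')));
  try linmap_solve.
by move=> a l /=; rewrite !ract_tmul mulrA.
Qed.

Lemma ract1 u : ract u 1 = u.
Proof.
apply: (tensor_ext (g := ract^~ 1) (g' := id)) => [||a l]; try linmap_solve.
by rewrite /= ract_tmul mulr1.
Qed.

Lemma lact_tmul m a l : lact m (a ⊗ l) = tlift (fun h n => actA h a ⊗ (n * l)) (coact m).
Proof. by rewrite /lact tlift_tmul //; bilinear_solve. Qed.

Lemma dprod_tmul a l a' l' :
  dp (a ⊗ l) (a' ⊗ l') = tlift (fun h n => ract (star (a ⊗ actA h a')) (n * l')) (coact l).
Proof. by rewrite /dprod !tlift_tmul //; bilinear_solve. Qed.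

Lemma dprod1l a a' l' : dp (a ⊗ 1) (a' ⊗ l') = ract (star (a ⊗ a')) l'.
Proof. by rewrite dprod_tmul coact1 tlift_tmul ?actA1 ?mul1r //; bilinear_solve. Qed.

Lemma dprod11 a b : dp (a ⊗ 1) (b ⊗ 1) = star (a ⊗ b).
Proof. by rewrite dprod1l ract1. Qed.

Lemma dprod_ractl u m v : dp (ract u m) v = dp u (lact m v).
Proof.
apply: (tensor_ext2 (g := fun u v => dp (ract u m) v) (g' := fun u v => dp u (lact m v)));
  try by move=> *; linmap_solve.
move=> a l a' l' /=; rewrite ract_tmul lact_tmul dprod_tliftr dprod_tmul coactM.
rewrite tlift_talg_mul; last by bilinear_solve.
rewrite exchange_tlift; apply: eq_tlift => g n'; rewrite dprod_tmul.
by apply: eq_tlift => h n; rewrite actAM mulrA.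
Qed.

Lemma dprod_ractr u v m : dp u (ract v m) = ract (dp u v) m.
Proof.
apply: (tensor_ext2 (g := fun u v => dp u (ract v m)) (g' := fun u v => ract (dp u v) m));
  try by move=> *; linmap_solve.
move=> a l a' l' /=; rewrite ract_tmul !dprod_tmul ract_tlift.
by apply: eq_tlift => h n; rewrite ractA mulrA.
Qed.

Lemma lact_ract m v m' : lact m (ract v m') = ract (lact m v) m'.
Proof.
apply: (tensor_ext (g := fun v => lact m (ract v m')) (g' := fun v => ract (lact m v) m'));
  try linmap_solve.
move=> a l /=; rewrite ract_tmul !lact_tmul ract_tlift.
by apply: eq_tlift => h n; rewrite ract_tmul mulrA.
Qed.

Lemma lact_tact m w : lact m w = tlift (fun h n => ract (TL h w) n) (coact m).
Proof.
apply: (tensor_ext (g := lact m) (g' := fun w => tlift (fun h n => ract (TL h w) n) (coact m)));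
  try linmap_solve.
move=> c l; rewrite lact_tmul.
under eq_tlift => h n do rewrite mul_coact tmul_tliftr.
rewrite -(coassoc_tlift coact_coassoc); try by move=> *; linmap_solve.
apply: eq_tlift => h n; rewrite tact_tmul // ract_tlift.
by apply: eq_tlift => h1 h2; rewrite ract_tmul.
Qed.

Lemma lact_star_dprod m b c : lact m (star (b ⊗ c)) = dp (lact m (b ⊗ 1)) (c ⊗ 1).
Proof.
rewrite lact_tact lact_tmul dprod_tliftl.
under eq_tlift => h n do rewrite -star_equiv tact_tmul // star_tlift ract_tlift.
rewrite (coassoc_tlift coact_coassoc); try by move=> *; linmap_solve.
apply: eq_tlift => h n; rewrite mulr1 dprod_tmul.
by apply: eq_tlift => g n'; rewrite mulr1.
Qed.

Lemma lact_dprod m u v : lact m (dp u v) = dp (lact m u) v.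
Proof.
have lact_dprod1 b w : lact m (dp (b ⊗ 1) w) = dp (lact m (b ⊗ 1)) w.
  apply: (tensor_ext (g := fun w => lact m (dp (b ⊗ 1) w))
                     (g' := dp (lact m (b ⊗ 1)))); try linmap_solve.
  move=> c n /=.
  by rewrite dprod1l lact_ract lact_star_dprod -dprod_ractr -tmul_ract1.
apply: (tensor_ext (g := fun u => lact m (dp u v)) (g' := fun u => dp (lact m u) v));
  try linmap_solve.
move=> b l /=.
by rewrite [b ⊗ l]tmul_ract1 dprod_ractl lact_dprod1 lact_ract dprod_ractl.
Qed.

Lemma dyn_lhs_tmul a b c : dyn_lhs coact actA star ((a ⊗ b) ⊗ c) = dp (star (a ⊗ b)) (c ⊗ 1).
Proof.
rewrite -[in RHS](tlift_tmul_id (star _)) dprod_tliftl /dyn_lhs tlift_tmul; last by bilinear_solve.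
apply: eq_tlift => b' l; rewrite dprod_tmul /tau tlift_tmul; last by bilinear_solve.
rewrite tlift_tlift; last by bilinear_solve.
by apply: eq_tlift => h n; rewrite tlift_tmul ?mulr1 //; bilinear_solve.
Qed.

Lemma dyn_rhs_tmul a b c : dyn_rhs star ((a ⊗ b) ⊗ c) = dp (a ⊗ 1) (star (b ⊗ c)).
Proof.
rewrite -[in RHS](tlift_tmul_id (star _)) dprod_tliftr /dyn_rhs tlift_tmul; last by bilinear_solve.
rewrite tlift_tmul; last by bilinear_solve.
by apply: eq_tlift => b' l; rewrite dprod1l.
Qed.

Lemma dynamical_assocP :
  is_dynamical_assoc coact actA star <->
  forall a b c, dp (star (a ⊗ b)) (c ⊗ 1) = dp (a ⊗ 1) (star (b ⊗ c)).
Proof.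
split=> [dyn a b c | dyn]; first by rewrite -dyn_lhs_tmul -dyn_rhs_tmul.
have lin_lhs : linmap (dyn_lhs coact actA star) by apply: tlift_linmap; bilinear_solve.
have lin_rhs : linmap (dyn_rhs star) by apply: tlift_linmap; bilinear_solve.
apply: tensor_ext => // s c.
apply: (tensor_ext (g := fun s => dyn_lhs coact actA star (s ⊗ c))
                   (g' := fun s => dyn_rhs star (s ⊗ c))); try linmap_solve.
by move=> a b; rewrite dyn_lhs_tmul dyn_rhs_tmul dyn.
Qed.

Lemma dprod_assoc :
  (forall a b c, dp (star (a ⊗ b)) (c ⊗ 1) = dp (a ⊗ 1) (star (b ⊗ c))) ->
  forall u v w, dp (dp u v) w = dp u (dp v w).
Proof.
move=> dyn.
have dprod_star a b w : dp (star (a ⊗ b)) w = dp (a ⊗ 1) (dp (b ⊗ 1) w).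
  apply: (tensor_ext (g := dp (star (a ⊗ b))) (g' := fun w => dp (a ⊗ 1) (dp (b ⊗ 1) w)));
    try linmap_solve.
  by move=> c n; rewrite dprod1l [c ⊗ n]tmul_ract1 !dprod_ractr dyn.
have dprod_assoc1 a v w : dp (dp (a ⊗ 1) v) w = dp (a ⊗ 1) (dp v w).
  apply: (tensor_ext (g := fun v => dp (dp (a ⊗ 1) v) w)
                     (g' := fun v => dp (a ⊗ 1) (dp v w))); try linmap_solve.
  by move=> b l /=; rewrite dprod1l dprod_ractl dprod_star [b ⊗ l]tmul_ract1 dprod_ractl.
move=> u v w.
apply: (tensor_ext (g := fun u => dp (dp u v) w) (g' := fun u => dp u (dp v w)));
  try linmap_solve.
move=> a l /=.
by rewrite [a ⊗ l]tmul_ract1 !dprod_ractl dprod_assoc1 lact_dprod.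
Qed.

Lemma tact_ract x u m :
  TL x (ract u m) = tlift (fun h h' => ract (TL h u) (actL h' m)) (Delta x).
Proof.
apply: (tensor_ext (g := fun u => TL x (ract u m))
                   (g' := fun u => tlift (fun h h' => ract (TL h u) (actL h' m)) (Delta x)));
  try linmap_solve.
move=> a l /=; rewrite ract_tmul tact_tmul //.
under eq_tlift => h h' do rewrite actL_mul tmul_tliftr.
rewrite -(coassoc_tlift Delta_coassoc); try by move=> *; linmap_solve.
apply: eq_tlift => h h'; rewrite tact_tmul // ract_tlift.
by apply: eq_tlift => h1 h2; rewrite ract_tmul.
Qed.

Lemma tact_dprod1 x a w :
  TL x (dp (a ⊗ 1) w) = tlift (fun h h' => dp (actA h a ⊗ 1) (TL h' w)) (Delta x).
Proof.
apply: (tensor_ext (g := fun w => TL x (dp (a ⊗ 1) w))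
                   (g' := fun w => tlift (fun h h' => dp (actA h a ⊗ 1) (TL h' w)) (Delta x)));
  try linmap_solve.
move=> c n /=; rewrite dprod1l tact_ract.
under eq_tlift => h h' do rewrite -star_equiv tact_tmul // star_tlift ract_tlift.
rewrite (coassoc_tlift Delta_coassoc); try by move=> *; linmap_solve.
apply: eq_tlift => h h'; rewrite tact_tmul // dprod_tliftr.
by apply: eq_tlift => h1 h2; rewrite dprod1l.
Qed.

Lemma tact_lact x m w :
  TL x (lact m w) = tlift (fun h h' => lact (actL h m) (TL h' w)) (Delta x).
Proof.
apply: (tensor_ext (g := fun w => TL x (lact m w))
                   (g' := fun w => tlift (fun h h' => lact (actL h m) (TL h' w)) (Delta x)));
  try linmap_solve.
move=> c n /=; rewrite lact_tmul tact_tlift.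
under eq_tlift => g n' do rewrite tact_tmul //.
under eq_tlift => g n' do under eq_tlift => h h' do rewrite actL_mul tmul_tliftr.
rewrite exchange_tlift; under eq_tlift => h h' do rewrite exchange_tlift.
rewrite -(coassoc_tlift Delta_coassoc); try by move=> *; linmap_solve.
under [RHS]eq_tlift => h h' do rewrite tact_tmul // lact_tlift.
under [RHS]eq_tlift => h h' do under eq_tlift => h1 h2 do rewrite lact_tmul.
rewrite -(coassoc_tlift Delta_coassoc); try by move=> *; linmap_solve.
apply: eq_tlift => h h'.
under [RHS]eq_tlift => h1 h2 do under eq_tlift => g n' do rewrite -actAM.
rewrite (coact_actL_tlift _ _ (K := fun g n' => actA g c ⊗ (n' * actL h' n)));
  last by bilinear_solve.
by apply: eq_tlift => h1 h2; apply: eq_tlift => g n'; rewrite actAM.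
Qed.

Lemma tact_dprod x u v :
  TL x (dp u v) = tlift (fun h h' => dp (TL h u) (TL h' v)) (Delta x).
Proof.
apply: (tensor_ext (g := fun u => TL x (dp u v))
                   (g' := fun u => tlift (fun h h' => dp (TL h u) (TL h' v)) (Delta x)));
  try linmap_solve.
move=> a l /=; rewrite [in LHS]tmul_ract1 dprod_ractl tact_dprod1.
under eq_tlift => h h' do rewrite tact_lact dprod_tliftr.
rewrite -(coassoc_tlift Delta_coassoc); try by move=> *; linmap_solve.
apply: eq_tlift => h h'; rewrite tact_tmul // dprod_tliftl.
by apply: eq_tlift => h1 h2; rewrite tmul_ract1 dprod_ractl.
Qed.

End DynamicalProduct.

Theorem proposition3p12
  (F : fieldType) (HF : [pchar F] =i pred0)
  (k : comNzRingType) (iota : {rmorphism F -> k})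
  (H : algType k) (Delta : H -> tensor H H) (eps : H -> k) (S : H -> H)
  (hopf : is_hopf Delta eps S)
  (L : algType k) (actL : H -> L -> L) (coact : L -> tensor H L)
  (base : is_base_algebra Delta eps actL coact)
  (A : lmodType k) (actA : H -> A -> A) (modA : is_Hmodule actA)
  (star : tensor A A -> tensor A L)
  (star_lin : linmap star)
  (star_equiv : forall x t,
     star (tact Delta actA actA x t) = tact Delta actA actL x (star t)) :
  is_dynamical_assoc coact actA star <->
  is_assoc_Hmodule_algebra_AL Delta actL coact actA star.
Proof.
case: hopf => [[Delta_lin _ _] Delta_coassoc _ _ _].
have dynP := dynamical_assocP base modA star_lin.
split=> [/dynP dyn | [assoc _]].
  split; first exact: (dprod_assoc base modA star_lin star_equiv dyn).
  exact: (tact_dprod Delta_lin Delta_coassoc base modA star_lin star_equiv).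
by apply/dynP => a b c; rewrite -!(dprod11 base modA star_lin) assoc.
Qed.
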